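(* The class PosLimSup is closed under $\min$, and the class AsLimInf is closed under $\max$.
   Context: A probabilistic weighted automaton over a finite alphabet $\Sigma$ is a tuple $A=(Q,\rho_I,\Sigma,\delta,\gamma)$ where $Q$ is a finite set of states, $\rho_I$ is a probability distribution on $Q$, $\delta:Q\times\Sigma\to\mathcal D(Q)$ assigns to each state and letter a probability distribution on $Q$, and $\gamma:Q\times\Sigma\times Q\to\mathbb Q$ is a weight function. A run over an infinite word $w=\sigma_1\sigma_2\dots$ is a sequence $r=q_0\sigma_1q_1\sigma_2\dots$ with $\rho_I(q_0)>0$ and $\delta(q_i,\sigma_{i+1})(q_{i+1})>0$ for all $i$; its weight sequence is $\gamma(r)=v_0v_1\dots$ with $v_i=\gamma(q_i,\sigma_{i+1},q_{i+1})$. For each $w$, the probabilities of finite run prefixes induce a probability measure $\mathbb P^A$ on runs over $w$. For a value function $\mathrm{Val}$, positive semantics: $L^{>0}_A(w)=\sup\{\eta\mid \mathbb P^A(\{r:\mathrm{Val}(\gamma(r))\ge\eta\})>0\}$; almost-sure semantics: $L^{=1}_A(w)=\sup\{\eta\mid \mathbb P^A(\{r:\mathrm{Val}(\gamma(r))\ge\eta\})=1\}$. $\mathsf{LimSup}(v)=\limsup_n v_n$, $\mathsf{LimInf}(v)=\liminf_n v_n$. PosLimSup is the class of $\mathsf{LimSup}$-automata under positive semantics; AsLimInf is the class of $\mathsf{LimInf}$-automata under almost-sure semantics. A class $\mathcal C$ is closed under $\max$ (resp. $\min$) if for any $A_1,A_2\in\mathcal C$ over the same alphabet there is $A\in\mathcal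 C$ with $L_A(w)=\max\{L_{A_1}(w),L_{A_2}(w)\}$ (resp. $\min$) for all words $w$. *)

From HB Require Import structures.
From mathcomp Require Import all_boot all_order all_algebra.
From mathcomp Require Import all_classical all_reals all_analysis.
Set Implicit Arguments.
Unset Strict Implicit.
Unset Printing Implicit Defensive.
Import Order.TTheory GRing.Theory Num.Theory.
Local Open Scope classical_set_scope.
Local Open Scope ring_scope.

Definition is_dist (Q : finType) (f : {ffun Q -> rat}) : Prop :=
  (forall q, 0 <= f q) /\ \sum_(q : Q) f q = 1.

(* Probabilistic weighted automaton A = (Q, rho_I, Sigma, delta, gamma). *)
Record PWA (Sigma : finType) := {
  state : finType;
  init : {ffun state -> rat};
  trans : state -> Sigma -> {ffun state -> rat};
  weight : state -> Sigma -> state -> rat;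
  init_is_dist : is_dist init;
  trans_is_dist : forall q a, is_dist (trans q a) }.

Section Runs.
Variables (Sigma : finType) (A : PWA Sigma).

Lemma state_inhabited : exists q : state A, init A q != 0.
Proof.
case: (init_is_dist A) => _ H.
apply/existsP; apply: contraT; rewrite negb_exists => /forallP H0.
move: H; rewrite big1 => [/esym/eqP|q _]; first by rewrite oner_eq0.
by apply/eqP; rewrite -[_ == _]negbK H0.
Qed.

Definition state_pt : state A := xchoose state_inhabited.

(* sequences of states q_0 q_1 ... (the letters are those of the fixed word) *)
Definition seqT := nat -> state A.
HB.instance Definition _ := gen_eqMixin seqT.
HB.instance Definition _ := gen_choiceMixin seqT.
HB.instance Definition _ := isPointed.Build seqT (fun _ => state_pt).

Definition cyl (n : nat) (p : nat -> state A) : set seqT :=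
  [set r | forall i, (i < n)%N -> r i = p i].

Definition cylinders : set (set seqT) := [set C | exists n p, C = cyl n p].

Definition RunSpace := @g_sigma_algebraType seqT cylinders.

Variable R : realType.

(* The word w = sigma_1 sigma_2 ... is w : nat -> Sigma with w i = sigma_(i+1). *)
Definition is_run_measure (w : nat -> Sigma)
    (P : probability RunSpace R) : Prop :=
  forall (n : nat) (p : nat -> state A),
    P (cyl n.+1 p) =
    (ratr (init A (p 0%N) * \prod_(i < n) @trans _ A (p i) (w i) (p i.+1)) : R)%:E.

Definition weight_seq (w : nat -> Sigma) (r : seqT) : nat -> \bar R :=
  fun i => (ratr (@weight _ A (r i) (w i) (r i.+1)) : R)%:E.

Definition LimSup (v : nat -> \bar R) : \bar R := limn_esup v.
Definition LimInf (v : nat -> \bar R) : \bar R := limn_einf v.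

Definition L_pos (Val : (nat -> \bar R) -> \bar R) (w : nat -> Sigma) : \bar R :=
  ereal_sup [set eta%:E | eta in
    [set eta : R | forall P : probability RunSpace R, is_run_measure w P ->
       (0 < P [set r : RunSpace | (eta%:E <= Val (weight_seq w r))%E])%E]].

Definition L_as (Val : (nat -> \bar R) -> \bar R) (w : nat -> Sigma) : \bar R :=
  ereal_sup [set eta%:E | eta in
    [set eta : R | forall P : probability RunSpace R, is_run_measure w P ->
       P [set r : RunSpace | (eta%:E <= Val (weight_seq w r))%E] = 1%E]].

End Runs.

Definition L_PosLimSup (R : realType) (Sigma : finType) (A : PWA Sigma)
  (w : nat -> Sigma) : \bar R := L_pos A (@LimSup R) w.
Definition L_AsLimInf (R : realType) (Sigma : finType) (A : PWA Sigma)
  (w : nat -> Sigma) : \bar R := L_as A (@LimInf R) w.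

(* For a pair of runs r1, r2 of A1, A2, a deterministic flag machine reading
   their weights emits a sequence whose limsup is at least eta iff both limsups
   are: for every possible weight k it keeps two flags recording whether each
   run has reached k since k was last emitted, and emits the largest k whose
   flags are both set.  The synchronous product of A1, A2 and this machine runs
   r1 and r2 independently, so the event {limsup >= eta} has probability
   P1(E1) * P2(E2), which is positive iff both factors are: the positive value
   of the product is the min.  Negating the weights turns limsup into liminf,
   and the complementary events give that the almost-sure value is the max.
   Run measures are unique, as they agree on cylinders, and they exist: a
   uniform point of [0, 1) decodes into a run by iterated inverse-CDF sampling. *)

From HB Require Import structures.
From mathcomp Require Import all_boot all_order all_algebra.
From mathcomp Require Import all_classical all_reals all_analysis.
From mathcomp Require Import ring.
Set Implicit Arguments.
Unset Strict Implicit.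
Unset Printing Implicit Defensive.
Import Order.TTheory GRing.Theory Num.Theory.
Local Open Scope classical_set_scope.
Local Open Scope ring_scope.

Definition infinitely_often (P : nat -> Prop) := forall N, exists2 n, (N <= n)%N & P n.

Lemma io_sub (P Q : nat -> Prop) :
  (forall n, P n -> Q n) -> infinitely_often P -> infinitely_often Q.
Proof. by move=> PQ HP N; have [n Nn /PQ] := HP N; exists n. Qed.

Lemma not_ioP (P : nat -> Prop) :
  ~ infinitely_often P <-> exists N, forall n, (N <= n)%N -> ~ P n.
Proof.
split=> [nio | [N HN] io]; last by have [n /HN] := io N.
apply: contrapT => ev; apply: nio => N; apply: contrapT => HN.
by apply: ev; exists N => n Nn Pn; apply: HN; exists n.
Qed.

Lemma io_pigeonhole (T : finType) (Q : nat -> T -> Prop) :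
  infinitely_often (fun n => exists t, Q n t) -> exists t, infinitely_often (Q^~ t).
Proof.
move=> ioQ; apply: contrapT => nioQ.
have /choice [N HN] : forall t, exists N, forall n, (N <= n)%N -> ~ Q n t.
  by move=> t; apply/not_ioP => ioQt; apply: nioQ; exists t.
have [n Nn [t]] := ioQ (\max_t N t).
by apply: HN; apply: leq_trans Nn; apply: leq_bigmax.
Qed.

Lemma io_or (P Q : nat -> Prop) :
  infinitely_often (fun n => P n \/ Q n) -> infinitely_often P \/ infinitely_often Q.
Proof.
move=> ioPQ.
have iob : infinitely_often (fun n => exists b : bool, if b then P n else Q n).
  by apply: io_sub ioPQ => n [Pn | Qn]; [exists true | exists false].
by have [[] ?] := io_pigeonhole iob; [left | right].
Qed.

Section LimnFiniteRange.
Variables (R : realType) (T : finType) (f : nat -> T) (val : T -> R).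
Local Notation u := (fun n => (val (f n))%:E).

Lemma limn_esup_inf (v : (\bar R)^nat) : limn_esup v = ereal_inf (range (esups v)).
Proof. by rewrite limn_esup_lim; apply: cvg_lim => //; exact: cvg_esups_inf. Qed.

(* Finiteness of the range leaves a gap between eta and the values below it. *)
Lemma limn_esup_fin_ge (eta : R) :
  (eta%:E <= limn_esup u)%E <-> infinitely_often (fun n => eta <= val (f n)).
Proof.
rewrite limn_esup_inf; split=> [etaL | ioeta]; last first.
  apply: le_ereal_inf_tmp => _ [N _ <-]; have [n Nn etan] := ioeta N.
  apply: (@le_trans _ _ (val (f n))%:E); first by rewrite lee_fin.
  by apply: ereal_sup_ubound; exists n.
apply: contrapT => /not_ioP [N HN].
pose M := \big[Order.max/(eta - 1)]_(t | val t < eta) val t.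
have ltMeta : M < eta.
  apply: (big_ind (fun x => x < eta)) => [|x y|//]; first by rewrite gtrBl ltr01.
  by rewrite gt_max => -> ->.
have : (esups u N <= M%:E)%E.
  apply: ub_ereal_sup => _ [n /= Nn <-]; rewrite lee_fin.
  by apply: le_bigmax_cond; rewrite ltNge; apply/negP/HN.
have Ninf : (ereal_inf (range (esups u)) <= esups u N)%E.
  by apply: ereal_inf_lbound; exists N.
by move=> /(le_trans (le_trans etaL Ninf)); rewrite lee_fin leNgt ltMeta.
Qed.

Lemma limn_esup_fin_gt (eta : R) :
  (eta%:E < limn_esup u)%E <-> infinitely_often (fun n => eta < val (f n)).
Proof.
split=> [etaL | ioeta].
  apply: contrapT => /not_ioP [N HN]; move: etaL; apply/negP; rewrite -leNgt.
  rewrite limn_esup_inf; apply: (@le_trans _ _ (esups u N)).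
    by apply: ereal_inf_lbound; exists N.
  by apply: ub_ereal_sup => _ [n /= Nn <-]; rewrite lee_fin leNgt; apply/negP/HN.
have [n0 _ etan0] := ioeta 0%N.
pose m := \big[Order.min/val (f n0)]_(t | eta < val t) val t.
have ltetam : eta < m.
  by apply: (big_ind (fun x => eta < x)) => // x y; rewrite lt_min => -> ->.
apply: lt_le_trans (_ : m%:E <= _)%E; first by rewrite lte_fin.
by apply/limn_esup_fin_ge; apply: io_sub ioeta => n; apply: bigmin_le_cond.
Qed.

End LimnFiniteRange.

Lemma limn_einf_fin_ge (R : realType) (T : finType) (f : nat -> T) (val : T -> R)
    (eta : R) :
  (eta%:E <= limn_einf (fun n => (val (f n))%:E))%E <->
  ~ infinitely_often (fun n => val (f n) < eta).
Proof.
have -> : limn_einf (fun n => (val (f n))%:E) =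
    (- limn_esup (fun n => ((fun t => - val t) (f n))%:E))%E.
  by rewrite -limn_einfN; congr limn_einf; apply/funext => n /=; rewrite opprK.
have ioN : infinitely_often (fun n => - eta < - val (f n)) <->
    infinitely_often (fun n => val (f n) < eta).
  by split=> io; apply: io_sub io => n; rewrite ltrN2.
rewrite leeNr -EFinN leNgt -ioN -(limn_esup_fin_gt f (fun t => - val t)).
by split=> [/negP | /negP].
Qed.

Definition flag_fires (xy : bool * bool) (a b : bool) := (xy.1 || a) && (xy.2 || b).

Definition flag_step (xy : bool * bool) (a b : bool) : bool * bool :=
  if flag_fires xy a b then (false, false) else (xy.1 || a, xy.2 || b).

Fixpoint flags (a b : nat -> bool) n : bool * bool :=
  if n is m.+1 then flag_step (flags a b m) (a m) (b m) else (false, false).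

Definition fires (a b : nat -> bool) n := flag_fires (flags a b n) (a n) (b n).

Lemma flags_swap a b n : flags b a n = ((flags a b n).2, (flags a b n).1).
Proof.
elim: n => //= n ->; rewrite /flag_step /flag_fires andbC.
by case: ifP.
Qed.

Lemma fires_swap a b n : fires b a n = fires a b n.
Proof. by rewrite /fires /flag_fires flags_swap andbC. Qed.

Lemma flags_fst_source a b m i : (m <= i)%N -> ~~ (flags a b m).1 ->
  (flags a b i).1 || a i -> exists2 j, (m <= j <= i)%N & a j.
Proof.
elim: i => [|i IH]; first by rewrite leqn0 => /eqP-> /negbTE-> /= a0; exists 0%N.
rewrite leq_eqVlt => /orP[/eqP-> /negbTE-> /= ai | le_mi fm].
  by exists i.+1; rewrite // leqnn.
case/orP => [| ai]; last by exists i.+1; rewrite // (ltnW le_mi) leqnn.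
rewrite /= /flag_step; case: ifP => //= _ /(IH le_mi fm) [j /andP[mj ji] aj].
by exists j; rewrite // mj (leq_trans ji).
Qed.

Lemma flags_fst_persist a b N j i : (forall n, (N <= n)%N -> ~~ fires a b n) ->
  (N <= j <= i)%N -> (flags a b j).1 || a j -> (flags a b i).1 || a i.
Proof.
move=> nfires /andP[Nj]; elim: i => [|i IH]; first by rewrite leqn0 => /eqP->.
rewrite leq_eqVlt => /orP[/eqP-> // | le_ji /(IH le_ji)].
have nfi := nfires i (leq_trans Nj le_ji).
by rewrite /= /flag_step -/(fires a b i) (negbTE nfi) /= => ->.
Qed.

(* Between two firings the first flag is reset and set again, which only a
   true [a j] can do; without firings the flags only grow. *)
Lemma io_fires a b :
  infinitely_often (fires a b) <-> infinitely_often a /\ infinitely_often b.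
Proof.
have io_fst a' b' : infinitely_often (fires a' b') -> infinitely_often a'.
  move=> iof N; have [i1 Ni1 f1] := iof N.
  have [i2 lt_i12 /andP[seen2 _]] := iof i1.+1.
  have reset : ~~ (flags a' b' i1.+1).1 by rewrite /= /flag_step -/(fires a' b' i1) f1.
  have [j /andP[ij _] aj] := flags_fst_source lt_i12 reset seen2.
  by exists j; rewrite // (leq_trans Ni1) // ltnW.
split=> [iof | [ioa iob]].
  split; first exact: io_fst iof.
  by apply: (io_fst b a); apply: io_sub iof => n; rewrite fires_swap.
apply: contrapT => /not_ioP [N nfires].
have {}nfires n : (N <= n)%N -> ~~ fires a b n by move=> /nfires /negP.
have [j1 Nj1 aj1] := ioa N; have [j2 Nj2 bj2] := iob N.
have seen_a : (flags a b (maxn j1 j2)).1 || a (maxn j1 j2).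
  by apply: (flags_fst_persist nfires (j := j1)); rewrite ?Nj1 ?leq_maxl ?aj1 ?orbT.
have seen_b : (flags b a (maxn j1 j2)).1 || b (maxn j1 j2).
  apply: (@flags_fst_persist b a N j2); last by rewrite bj2 orbT.
    by move=> n /nfires; rewrite fires_swap.
  by rewrite Nj2 leq_maxr.
move: seen_b; rewrite flags_swap /= => seen_b.
have := nfires _ (leq_trans Nj1 (leq_maxl j1 j2)).
by rewrite /fires /flag_fires seen_a seen_b.
Qed.

Section KeyedFlags.
Variables (V : realDomainType) (K : finType) (kval : K -> V).

(* One pair of flags per key [k]: the flags record whether each of the two
   input sequences has reached [kval k] since [k] was last emitted. *)
Definition next_keyflags (F : {ffun K -> bool * bool}) (v1 v2 : V) :
  {ffun K -> bool * bool} :=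
  [ffun k => flag_step (F k) (kval k <= v1) (kval k <= v2)].

Definition key_fires (F : {ffun K -> bool * bool}) (v1 v2 : V) (k : K) :=
  flag_fires (F k) (kval k <= v1) (kval k <= v2).

Definition flag_output (F : {ffun K -> bool * bool}) (v1 v2 : V) : V :=
  \big[Order.max/Order.min v1 v2]_(k | key_fires F v1 v2 k) kval k.

Lemma flag_output_cases F v1 v2 : flag_output F v1 v2 = Order.min v1 v2 \/
  exists2 k, key_fires F v1 v2 k & flag_output F v1 v2 = kval k.
Proof.
apply: (big_ind (fun x =>
  x = Order.min v1 v2 \/ exists2 k, key_fires F v1 v2 k & x = kval k)).
- by left.
- by move=> x y Hx Hy; case: leP.
- by move=> k fk; right; exists k.
Qed.

Variables k1 k2 : nat -> K.

Fixpoint keyflags n : {ffun K -> bool * bool} :=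
  if n is m.+1 then next_keyflags (keyflags m) (kval (k1 m)) (kval (k2 m))
  else [ffun => (false, false)].

Definition keyflags_output n := flag_output (keyflags n) (kval (k1 n)) (kval (k2 n)).

Lemma key_firesE k n : key_fires (keyflags n) (kval (k1 n)) (kval (k2 n)) k =
  fires (fun i => kval k <= kval (k1 i)) (fun i => kval k <= kval (k2 i)) n.
Proof.
rewrite /key_fires /fires; congr flag_fires.
by elim: n => [|n IH]; rewrite /= ffunE // IH.
Qed.

Section MonotonePredicate.
Variable P : V -> Prop.
Hypothesis P_up : forall x y, x <= y -> P x -> P y.

(* By pigeonhole some single key fires infinitely often. *)
Lemma io_keyflags_output_inputs : infinitely_often (P \o keyflags_output) ->
  infinitely_often (P \o kval \o k1) /\ infinitely_often (P \o kval \o k2).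
Proof.
move=> ioP; have : infinitely_often (fun n =>
    P (Order.min (kval (k1 n)) (kval (k2 n))) \/
    exists k, key_fires (keyflags n) (kval (k1 n)) (kval (k2 n)) k /\ P (kval k)).
  apply: io_sub ioP => n /=; rewrite /keyflags_output.
  have [-> | [k fk ->]] := flag_output_cases (keyflags n) (kval (k1 n)) (kval (k2 n)).
    by left.
  by right; exists k.
case/io_or => [iomin | /io_pigeonhole [k iok]].
  by split; apply: io_sub iomin => n /P_up; apply; rewrite ge_min lexx ?orbT.
have [_ _ [_ Pk]] := iok 0%N.
have /io_fires[io1 io2] : infinitely_often
    (fires (fun i => kval k <= kval (k1 i)) (fun i => kval k <= kval (k2 i))).
  by apply: io_sub iok => n [+ _]; rewrite key_firesE.
by split; [apply: io_sub io1 | apply: io_sub io2] => n /P_up; apply.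
Qed.

Lemma io_key_value (k' : nat -> K) : infinitely_often (P \o kval \o k') ->
  exists2 k, P (kval k) & infinitely_often (fun n => k' n = k).
Proof.
move=> ioP; have [k iok] : exists k, infinitely_often (fun n => k' n = k /\ P (kval k)).
  by apply: io_pigeonhole; apply: io_sub ioP => n Pn; exists (k' n).
by have [_ _ [_ Pk]] := iok 0%N; exists k => //; apply: io_sub iok => n [].
Qed.

(* The smaller of two recurring keys of the inputs fires infinitely often. *)
Lemma io_inputs_keyflags_output :
  infinitely_often (P \o kval \o k1) -> infinitely_often (P \o kval \o k2) ->
  infinitely_often (P \o keyflags_output).
Proof.
move=> /io_key_value [ka Pka ioka] /io_key_value [kb Pkb iokb].
have [k [le_ka le_kb Pk]] :
    exists k, [/\ kval k <= kval ka, kval k <= kval kb & P (kval k)].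
  case: (leP (kval ka) (kval kb)) => [le_ab | /ltW le_ba].
    by exists ka; split.
  by exists kb; split.
have /io_fires iof : infinitely_often (fun i => kval k <= kval (k1 i)) /\
    infinitely_often (fun i => kval k <= kval (k2 i)).
  by split; [apply: io_sub ioka | apply: io_sub iokb] => n ->.
apply: io_sub iof => n fn; apply: P_up Pk.
by apply: le_bigmax_cond; rewrite key_firesE.
Qed.

Lemma io_keyflags_output : infinitely_often (P \o keyflags_output) <->
  infinitely_often (P \o kval \o k1) /\ infinitely_often (P \o kval \o k2).
Proof.
split; first exact: io_keyflags_output_inputs.
by case; exact: io_inputs_keyflags_output.
Qed.

End MonotonePredicate.

End KeyedFlags.

Section RunSpace.
Variables (Sigma : finType) (A : PWA Sigma) (R : realType).
Local Notation S := (state A).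
Local Notation RS := (RunSpace A).

Definition prefix k (r : seqT A) : {ffun 'I_k -> S} := [ffun i : 'I_k => r i].

Definition extend k (f : {ffun 'I_k -> S}) : seqT A :=
  fun i => if insub i is Some j then f j else state_pt A.

Lemma cyl_extend k f (r : seqT A) : cyl k (extend f) r <-> prefix k r = f.
Proof.
split=> [rf | <- i ik]; last by rewrite /extend insubT ffunE.
by apply/ffunP => i; rewrite ffunE rf // /extend valK.
Qed.

Lemma cyl_measurable n p : measurable (cyl n p : set RS).
Proof. by apply: sub_sigma_algebra; exists n, p. Qed.

Lemma prefix_measurable k (Q : pred {ffun 'I_k -> S}) :
  measurable ([set r | Q (prefix k r)] : set RS).
Proof.
have -> : ([set r | Q (prefix k r)] : set RS) =
    \big[setU/set0]_(f <- enum {ffun 'I_k -> S} | Q f) cyl k (extend f).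
  rewrite -bigcup_seq_cond; apply/seteqP; split=> r /=.
    move=> Qr; exists (prefix k r); last exact/cyl_extend.
    by apply/andP; rewrite mem_enum.
  by move=> [f /andP[_ Qf] /cyl_extend ->].
by apply: bigsetU_measurable => f _; exact: cyl_measurable.
Qed.

Lemma step_measurable n (Q : rel S) :
  measurable ([set r | Q (r n) (r n.+1)] : set RS).
Proof.
pose Qf := [pred f : {ffun 'I_n.+2 -> S} | Q (f (inord n)) (f (inord n.+1))].
have -> : ([set r | Q (r n) (r n.+1)] : set RS) = [set r | Qf (prefix n.+2 r)].
  by apply/seteqP; split=> r; rewrite /= !ffunE !inordK.
exact: prefix_measurable.
Qed.

Lemma io_measurable (Q : nat -> set RS) : (forall n, measurable (Q n)) ->
  measurable [set r | infinitely_often (fun n => Q n r)].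
Proof.
move=> mQ; have -> : [set r | infinitely_often (fun n => Q n r)] =
    \bigcap_N \bigcup_k Q (N + k)%N.
  apply/seteqP; split=> [r ioQ N _ | r ioQ N].
    by have [n Nn Qn] := ioQ N; exists (n - N)%N; rewrite ?subnKC.
  by have [k _ Qk] := ioQ N I; exists (N + k)%N; rewrite ?leq_addr.
by apply: bigcapT_measurable => N; apply: bigcupT_measurable => k.
Qed.

(* Adding the empty set makes the cylinders closed under intersection. *)
Definition Gcyl : set (set RS) := @cylinders _ A `|` [set set0].

Lemma cyl0 p : @cyl _ A 0 p = setT.
Proof. by apply/seteqP; split. Qed.

Lemma cylI_le n m p q : (n <= m)%N -> Gcyl (@cyl _ A n p `&` cyl m q).
Proof.
move=> le_nm; have [pq | /forallPn [i npq]] := boolP [forall i : 'I_n, p i == q i].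
  left; exists m, q; apply/seteqP; split=> [r [] // | r rq]; split=> // i lt_in.
  by rewrite rq ?(leq_trans lt_in le_nm) // (eqP (forallP pq (Ordinal lt_in))).
right; apply/seteqP; split=> // r [rp rq]; move: npq.
by rewrite -(rp i (ltn_ord i)) -(rq i (leq_trans (ltn_ord i) le_nm)) eqxx.
Qed.

Lemma Gcyl_setI : setI_closed Gcyl.
Proof.
move=> B C [[n [p ->]] | ->] [[m [q ->]] | ->]; rewrite ?setI0 ?set0I; try by right.
have [le_nm | /ltnW le_mn] := leqP n m; first exact: cylI_le.
by rewrite setIC; exact: cylI_le.
Qed.

Lemma measurable_Gcyl : @measurable _ RS = <<s Gcyl >>.
Proof.
apply/seteqP; split; first by apply: sub_sigma_algebra2 => B; left.
apply: smallest_sub; first exact: smallest_sigma_algebra.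
by move=> B [|->]; [exact: sub_sigma_algebra | exact: measurable0].
Qed.

Lemma run_measure_unique (w : nat -> Sigma) (P P' : probability RS R) :
  is_run_measure w P -> is_run_measure w P' -> forall B, measurable B -> P B = P' B.
Proof.
move=> HP HP'; apply: (measure_unique Gcyl (fun _ => setT)).
- exact: measurable_Gcyl.
- exact: Gcyl_setI.
- by move=> _; left; exists 0%N, (fun _ => state_pt A); rewrite cyl0.
- by rewrite bigcup_const.
- move=> B [[[|n] [p ->]] | ->]; last by rewrite !measure0.
    by rewrite cyl0; exact: (etrans (probability_setT P) (esym (probability_setT P'))).
  exact: (etrans (HP n p) (esym (HP' n p))).
- by move=> _; apply: (le_lt_trans (probability_le1 P measurableT)); exact: ltry.
Qed.

Definition weight_real (t : S * Sigma * S) : R := ratr (weight t.1.1 t.1.2 t.2).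

Definition limsup_event (w : nat -> Sigma) (eta : R) : set RS :=
  [set r | (eta%:E <= LimSup (weight_seq R w r))%E].

Definition liminf_event (w : nat -> Sigma) (eta : R) : set RS :=
  [set r | (eta%:E <= LimInf (weight_seq R w r))%E].

Lemma limsup_eventP w eta (r : seqT A) : limsup_event w eta r <->
  infinitely_often (fun n => eta <= weight_real (r n, w n, r n.+1)).
Proof. exact: (limn_esup_fin_ge (fun n => (r n, w n, r n.+1)) weight_real). Qed.

Lemma liminf_eventP w eta (r : seqT A) : liminf_event w eta r <->
  ~ infinitely_often (fun n => weight_real (r n, w n, r n.+1) < eta).
Proof. exact: (limn_einf_fin_ge (fun n => (r n, w n, r n.+1)) weight_real). Qed.

Lemma limsup_event_measurable w eta : measurable (limsup_event w eta).
Proof.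
have -> : limsup_event w eta =
    [set r | infinitely_often (fun n => eta <= weight_real (r n, w n, r n.+1))].
  by apply/seteqP; split=> r /limsup_eventP.
apply: io_measurable => n.
exact: (step_measurable n (fun a b => eta <= weight_real (a, w n, b))).
Qed.

Lemma liminf_event_measurable w eta : measurable (liminf_event w eta).
Proof.
have -> : liminf_event w eta =
    ~` [set r | infinitely_often (fun n => weight_real (r n, w n, r n.+1) < eta)].
  by apply/seteqP; split=> r /liminf_eventP.
apply: measurableC; apply: io_measurable => n.
exact: (step_measurable n (fun a b => weight_real (a, w n, b) < eta)).
Qed.

Lemma L_pos_run_measure w (P : probability RS R) : is_run_measure w P ->
  L_pos A (@LimSup R) w =
  ereal_sup [set eta%:E | eta in [set eta | (0 < P (limsup_event w eta))%E]].
Proof.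
move=> HP; congr (ereal_sup [set _%:E | _ in _]); apply/seteqP.
split=> eta; first by move=> /(_ P HP).
move=> Peta P' HP'; rewrite -(run_measure_unique HP HP') //.
exact: limsup_event_measurable.
Qed.

Lemma L_as_run_measure w (P : probability RS R) : is_run_measure w P ->
  L_as A (@LimInf R) w =
  ereal_sup [set eta%:E | eta in [set eta | P (liminf_event w eta) = 1%E]].
Proof.
move=> HP; congr (ereal_sup [set _%:E | _ in _]); apply/seteqP.
split=> eta; first by move=> /(_ P HP).
move=> Peta P' HP'; rewrite -(run_measure_unique HP HP') //.
exact: liminf_event_measurable.
Qed.

End RunSpace.

Lemma ler_sum_sub (V : numDomainType) (I : finType) (P Q : pred I) (F : I -> V) :
  (forall i, 0 <= F i) -> (forall i, P i -> Q i) ->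
  \sum_(i | P i) F i <= \sum_(i | Q i) F i.
Proof.
move=> F0 PQ; rewrite [leLHS]big_mkcond [leRHS]big_mkcond /=.
by apply: ler_sum => i _; case: ifP => [/PQ ->|_] //; case: ifP.
Qed.

Lemma discrete_ivt (V : realDomainType) (f : nat -> V) t N :
  f 0%N <= t -> t < f N -> exists2 k, (k < N)%N & f k <= t < f k.+1.
Proof.
elim: N => [|N IH] f0 tN; first by rewrite ltNge f0 in tN.
have [/(IH f0) [k kN fk] | fNt] := ltP t (f N); first by exists k => //; exact: ltnW.
by exists N; rewrite ?fNt.
Qed.

(* Inverse-CDF sampling: [0, 1) is cut into consecutive cells, one of length
   [mass q] per state [q]; [sample t] is the state whose cell contains [t] and
   [rescale t] the relative position of [t] in that cell, which is again
   uniformly distributed on [0, 1). *)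
Section Sampling.
Variables (R : realType) (S : finType) (d : {ffun S -> rat}).
Hypothesis d_dist : is_dist d.

Definition mass q : R := ratr (d q).
Definition cdf k : R := \sum_(q | (enum_rank q < k)%N) mass q.
Definition cell_start (q : S) := cdf (enum_rank q).

Lemma mass_ge0 q : 0 <= mass q.
Proof. by rewrite /mass ler0q; case: d_dist. Qed.

Lemma cdf_mono k k' : (k <= k')%N -> cdf k <= cdf k'.
Proof.
by move=> le_kk'; apply: ler_sum_sub => [|q /leq_trans]; [exact: mass_ge0 | apply].
Qed.

Lemma cdf0 : cdf 0 = 0.
Proof. by rewrite /cdf big_pred0. Qed.

Lemma cdf_card : cdf #|S| = 1.
Proof.
rewrite /cdf (eq_bigl xpredT) => [|q]; last by rewrite ltn_ord.
by case: d_dist => _ d1; rewrite /mass -rmorph_sum /= d1 rmorph1.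
Qed.

Lemma cdf_ge0 k : 0 <= cdf k.
Proof. by rewrite -cdf0; apply: cdf_mono. Qed.

Lemma cdf_le1 k : cdf k <= 1.
Proof.
by rewrite -cdf_card; apply: ler_sum_sub => [q|q _]; [exact: mass_ge0 | exact: ltn_ord].
Qed.

Lemma cdfS q : cdf (enum_rank q).+1 = cell_start q + mass q.
Proof.
rewrite /cdf /cell_start (bigD1 q) //= addrC; congr (_ + _); apply: eq_bigl => q'.
rewrite ltnS; case: (eqVneq q' q) => [-> | nq]; first by rewrite ltnn leqnn.
rewrite andbT leq_eqVlt; case: eqP => // /val_inj /enum_rank_inj eqq.
by rewrite eqq eqxx in nq.
Qed.

Definition in_cell (q : S) t := cell_start q <= t < cell_start q + mass q.

Lemma in_cell_unique q q' t : in_cell q t -> in_cell q' t -> q = q'.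
Proof.
wlog lt_qq' : q q' / (enum_rank q < enum_rank q')%N => [hwlog|].
  case: (ltngtP (enum_rank q) (enum_rank q')) => [lt|lt|/val_inj/enum_rank_inj //].
    exact: hwlog.
  by move=> ? ?; apply/esym/hwlog.
move=> /andP[_ tq] /andP[q't _]; have := cdf_mono lt_qq'.
by rewrite cdfS => /(lt_le_trans tq); rewrite ltNge q't.
Qed.

Definition sample (s0 : S) (t : R) : S := odflt s0 [pick q | in_cell q t].

Lemma sampleP s0 t q : 0 <= t < 1 -> sample s0 t = q <-> in_cell q t.
Proof.
move=> /andP[t0 t1].
have [k kS /andP[ck tk]] : exists2 k, (k < #|S|)%N & cdf k <= t < cdf k.+1.
  by apply: discrete_ivt; rewrite ?cdf0 ?cdf_card.
have cell_q0 : in_cell (enum_val (Ordinal kS)) t.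
  by rewrite /in_cell -cdfS /cell_start enum_valK ck.
rewrite /sample; case: pickP => [q' cell_q' | /(_ _)/negbT/negP no_cell].
  by split=> [<- | /(in_cell_unique cell_q')].
by case: (no_cell _ cell_q0).
Qed.

Definition rescale (s0 : S) (t : R) : R :=
  (t - cell_start (sample s0 t)) / mass (sample s0 t).

Lemma sample_rescaleP s0 q x y t : 0 <= x -> x <= y -> y <= 1 ->
  (0 <= t < 1 /\ sample s0 t = q /\ x <= rescale s0 t < y) <->
  (cell_start q + mass q * x <= t < cell_start q + mass q * y).
Proof.
move=> x0 le_xy y1.
have le_cell1 : cell_start q + mass q <= 1 by rewrite -cdfS cdf_le1.
split=> [[t01 [sq /andP[xr ry]]] | /andP[lo hi]].
  have /andP[ct tc] := (sampleP s0 q t01).1 sq.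
  have mq0 : 0 < mass q by rewrite -(ltrD2l (cell_start q)) addr0 (le_lt_trans ct tc).
  move: xr ry; rewrite /rescale sq ler_pdivlMr // ltr_pdivrMr // => xr ry.
  by rewrite -lerBrDl -ltrBlDl mulrC xr mulrC ry.
have mq0 : 0 < mass q.
  rewrite lt_def mass_ge0 andbT; apply/eqP => m0.
  by move: (le_lt_trans lo hi); rewrite m0 !mul0r ltxx.
have lo' : cell_start q <= t.
  by apply: le_trans lo; rewrite lerDl mulr_ge0 // ltW.
have hi' : t < cell_start q + mass q.
  by apply: (lt_le_trans hi); rewrite lerD2l ler_piMr // ltW.
have t01 : 0 <= t < 1.
  by rewrite (le_trans (cdf_ge0 _) lo') (lt_le_trans hi' le_cell1).
have sq := (sampleP s0 q t01).2 (introT andP (conj lo' hi')).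
split=> //; split=> //.
by rewrite /rescale sq ler_pdivlMr // ltr_pdivrMr // lerBrDl ltrBlDl mulrC lo mulrC hi.
Qed.

Lemma rescale01 s0 t : 0 <= t < 1 -> 0 <= rescale s0 t < 1.
Proof.
move=> t01; have /andP[lo hi] := (sampleP s0 (sample s0 t) t01).1 erefl.
set q := sample s0 t.
have cell_t : cell_start q + mass q * 0 <= t < cell_start q + mass q * 1.
  by rewrite mulr0 addr0 mulr1 lo hi.
by have [_ [_ ->]] := (sample_rescaleP s0 q t (lexx 0) ler01 (lexx 1)).2 cell_t.
Qed.

Definition interval_coded (Phi : R -> R -> R -> Prop) (a b : R) :=
  [/\ 0 <= a, 0 <= b, a + b <= 1 & forall x y t, 0 <= x -> x <= y -> y <= 1 ->
     Phi x y t <-> a + b * x <= t < a + b * y].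

Lemma interval_coded_ext (Phi Psi : R -> R -> R -> Prop) a b :
  (forall x y t, Phi x y t <-> Psi x y t) ->
  interval_coded Phi a b -> interval_coded Psi a b.
Proof. by move=> PhiPsi [a0 b0 ab1 code]; split=> // x y t *; rewrite -PhiPsi code. Qed.

Lemma interval_coded_unit : interval_coded (fun x y t => x <= t < y) 0 1.
Proof. by split=> [||| x y t *]; rewrite ?lexx ?ler01 ?add0r ?mul1r. Qed.

Lemma interval_coded_sample s0 q Phi a b : interval_coded Phi a b ->
  interval_coded (fun x y t => 0 <= t < 1 /\ sample s0 t = q /\ Phi x y (rescale s0 t))
    (cell_start q + mass q * a) (mass q * b).
Proof.
move=> [a0 b0 ab1 codePhi]; have m0 := mass_ge0 q.
have le_cell1 : cell_start q + mass q <= 1 by rewrite -cdfS cdf_le1.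
have lin z :
    cell_start q + mass q * a + mass q * b * z = cell_start q + mass q * (a + b * z).
  by rewrite mulrDr mulrA addrA.
split; first by apply: addr_ge0; [exact: cdf_ge0 | exact: mulr_ge0].
- exact: mulr_ge0.
- by rewrite -addrA -mulrDr (le_trans _ le_cell1) // lerD2l ler_piMr.
move=> x y t x0 le_xy y1; rewrite !lin.
have x'0 : 0 <= a + b * x by apply: addr_ge0 => //; exact: mulr_ge0.
have le_x'y' : a + b * x <= a + b * y by rewrite lerD2l ler_wpM2l.
have y'1 : a + b * y <= 1 by apply: le_trans ab1; rewrite lerD2l ler_piMr.
rewrite -(sample_rescaleP s0 q t x'0 le_x'y' y'1).
by split=> -[t01 [sq]]; rewrite codePhi.
Qed.

End Sampling.

Section Decoding.
Variables (Sigma : finType) (A : PWA Sigma) (R : realType).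
Local Notation S := (state A).
Local Notation s0 := (state_pt A).

Definition decode_step (qt : S * R) (a : Sigma) : S * R :=
  (sample (trans qt.1 a) s0 qt.2, rescale (trans qt.1 a) s0 qt.2).

Fixpoint decode (d0 : {ffun S -> rat}) (w : nat -> Sigma) (t : R) n : S * R :=
  if n is m.+1 then decode_step (decode d0 w t m) (w m)
  else (sample d0 s0 t, rescale d0 s0 t).

Lemma decodeS d0 w t n : decode d0 w t n.+1 =
  decode (trans (sample d0 s0 t) (w 0%N)) (fun i => w i.+1) (rescale d0 s0 t) n.
Proof.
by elim: n => // n IH; rewrite -[LHS]/(decode_step (decode d0 w t n.+1) (w n.+1)) IH.
Qed.

Lemma decode01 d0 w t n : is_dist d0 -> 0 <= t < 1 -> 0 <= (decode d0 w t n).2 < 1.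
Proof.
move=> d0_dist t01; elim: n => [|n IH] /=; first exact: rescale01.
exact/rescale01/IH/trans_is_dist.
Qed.

Definition prefix_prob (d0 : {ffun S -> rat}) (w : nat -> Sigma) (p : nat -> S) n : R :=
  ratr (d0 (p 0%N) * \prod_(i < n) trans (p i) (w i) (p i.+1)).

Lemma prefix_prob_ge0 d0 w p n : is_dist d0 -> 0 <= prefix_prob d0 w p n.
Proof.
move=> [d0_ge0 _]; rewrite /prefix_prob ler0q mulr_ge0 //; apply: prodr_ge0 => i _.
by case: (trans_is_dist (p i) (w i)).
Qed.

(* The [t] decoding to a run with prefix [p] form an interval of length
   [prefix_prob]: decoding the first state restricts [t] to a cell, and the
   rest of the run is decoded from the rescaled position in that cell. *)
Lemma decode_interval n d0 w p : is_dist d0 -> exists al : R, interval_coded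
  (fun x y t => [/\ 0 <= t < 1, forall i, (i <= n)%N -> (decode d0 w t i).1 = p i
                  & x <= (decode d0 w t n).2 < y])
  al (prefix_prob d0 w p n).
Proof.
elim: n d0 w p => [|n IH] d0 w p d0_dist.
  have := interval_coded_sample d0_dist s0 (p 0%N) (interval_coded_unit R).
  rewrite mulr0 addr0 mulr1 => code; exists (cell_start R d0 (p 0%N)).
  rewrite /prefix_prob big_ord0 mulr1; apply: interval_coded_ext code => x y t.
  split=> [[t01 [sq xr]] | [t01 pre xr]]; first by split=> // -[|i].
  by split=> //; split=> //; exact: (pre 0%N).
have [al code] := IH _ (fun i => w i.+1) (fun i => p i.+1) (trans_is_dist (p 0%N) (w 0%N)).
have code' := interval_coded_sample d0_dist s0 (p 0%N) code.
exists (cell_start R d0 (p 0%N) + mass R d0 (p 0%N) * al).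
have -> : prefix_prob d0 w p n.+1 = mass R d0 (p 0%N) *
    prefix_prob (trans (p 0%N) (w 0%N)) (fun i => w i.+1) (fun i => p i.+1) n.
  by rewrite /prefix_prob /mass big_ord_recl /= -rmorphM /= mulrA.
apply: interval_coded_ext code' => x y t.
split=> [[t01 [sq [t'01 pre xr]]] | [t01 pre xr]].
  by split=> // [[|i] ni|]; rewrite ?decodeS /= sq //; exact: pre.
have sq : sample d0 s0 t = p 0%N by exact: (pre 0%N).
split=> //; split=> //; split; first exact: rescale01.
  by move=> i ni; rewrite -sq -decodeS; exact: pre.
by rewrite -sq -decodeS.
Qed.

End Decoding.

Section UnitInterval.
Variable R : realType.

(* Folds [R] onto [0, 1) so that decoding is defined on the whole line. *)
Definition clamp01 (u : R) : R := if 0 <= u < 1 then u else 0.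

Lemma clamp01_itv u : 0 <= clamp01 u < 1.
Proof. by rewrite /clamp01; case: ifP => // _; rewrite lexx ltr01. Qed.

Lemma measurable_unit_itv : measurable (`[0, 1[%classic : set (measurableTypeR R)).
Proof. exact: measurable_itv. Qed.

Lemma measurable_clamp01_preimage (X : set (measurableTypeR R)) :
  measurable (X `&` `[0, 1[%classic) ->
  measurable ([set u | X (clamp01 u)] : set (measurableTypeR R)).
Proof.
move=> mX; have -> : [set u | X (clamp01 u)] =
    (X `&` `[0, 1[%classic) `|` (~` `[0, 1[%classic `&` [set _ | X 0]).
  apply/seteqP; split=> u /=; rewrite /clamp01 in_itv /=.
    by case: ifPn => u01 Xu; [left | right].
  by case=> [[Xu ->] // | [/negP/negbTE -> X0]].
apply: measurableU => //.
apply: measurableI; first exact: measurableC measurable_unit_itv.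
by have [X0 | nX0] := pselect (X 0); [rewrite (_ : [set _ | X 0] = setT) |
  rewrite (_ : [set _ | X 0] = set0)] => //; apply/seteqP; split.
Qed.

Definition unit_lebesgue := mrestr (@lebesgue_measure R) measurable_unit_itv.

Lemma unit_lebesgue_itv a b : 0 <= a -> a <= b -> b <= 1 ->
  unit_lebesgue `[a, b[%classic = (b - a)%:E.
Proof.
move=> a0 le_ab b1; rewrite /unit_lebesgue /mrestr setIidl.
  by rewrite lebesgue_measure_itv /= lte_fin; case: ltgtP le_ab => // -> _; rewrite subrr.
move=> x /=; rewrite !in_itv /= => /andP[ax xb].
by rewrite (le_trans a0 ax) (lt_le_trans xb b1).
Qed.

Lemma unit_lebesgue_setT : unit_lebesgue setT = 1%E.
Proof.
have -> : 1%E = (1 - 0 : R)%:E by rewrite subr0.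
by rewrite -unit_lebesgue_itv // /unit_lebesgue /mrestr setTI setIid.
Qed.

Lemma unit_lebesgue_clamp01 (X : set (measurableTypeR R)) :
  unit_lebesgue [set u | X (clamp01 u)] = unit_lebesgue X.
Proof.
rewrite /unit_lebesgue /mrestr; congr lebesgue_measure; apply/seteqP.
by split=> u /=; rewrite in_itv /= => -[Xu u01]; split; rewrite /= ?in_itv //=;
  move: Xu; rewrite /clamp01 u01.
Qed.

HB.instance Definition _ := Measure.on unit_lebesgue.
HB.instance Definition _ :=
  Measure_isProbability.Build _ _ R unit_lebesgue unit_lebesgue_setT.

End UnitInterval.

Section RunMeasureExistence.
Variables (Sigma : finType) (A : PWA Sigma) (R : realType) (w : nat -> Sigma).

Definition decode_run (u : measurableTypeR R) : RunSpace A :=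
  fun i => (decode (init A) w (clamp01 u) i).1.

Lemma decode_run_preimage n p : exists2 al : R,
    0 <= al /\ al + prefix_prob R (init A) w p n <= 1 &
  decode_run @^-1` (cyl n.+1 p) =
    [set u | `[al, al + prefix_prob R (init A) w p n[%classic (clamp01 u)].
Proof.
have [al [al0 _ al1 code]] := decode_interval R n w p (init_is_dist A).
exists al => //; apply/seteqP; split=> u /=; rewrite in_itv /=; last first.
  move=> cell; have := (code 0 1 (clamp01 u) (lexx 0) ler01 (lexx 1)).2.
  by rewrite mulr0 addr0 mulr1 => /(_ cell) [_ pre _] i /pre.
move=> pre; have := (code 0 1 (clamp01 u) (lexx 0) ler01 (lexx 1)).1.
rewrite mulr0 addr0 mulr1; apply; split; [exact: clamp01_itv | by move=> i /pre |].
exact/decode01/clamp01_itv/init_is_dist.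
Qed.

Lemma measurable_decode_run : measurable_fun setT decode_run.
Proof.
apply: (@measurability _ _ _ _ setT decode_run (@cylinders _ A)) => //.
move=> _ [B [[|n] [p ->]] <-]; rewrite setTI; first by rewrite cyl0 preimage_setT.
have [al _ ->] := decode_run_preimage n p.
by apply: measurable_clamp01_preimage; apply: measurableI => //; exact: measurable_itv.
Qed.

HB.instance Definition _ :=
  isMeasurableFun.Build _ _ _ _ decode_run measurable_decode_run.

Lemma run_measure_exists : exists P : probability (RunSpace A) R, is_run_measure w P.
Proof.
exists (distribution (@unit_lebesgue R) [mfun of decode_run]) => n p.
change (unit_lebesgue (decode_run @^-1` cyl n.+1 p) =
  (prefix_prob R (init A) w p n)%:E).
have [al [al0 al1] ->] := decode_run_preimage n p.
rewrite unit_lebesgue_clamp01 unit_lebesgue_itv //; first by rewrite addrC addKr.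
by rewrite lerDl; apply/prefix_prob_ge0/init_is_dist.
Qed.

End RunMeasureExistence.

Definition dist_pair (S1 S2 : finType) (d1 : {ffun S1 -> rat}) (d2 : {ffun S2 -> rat}) :
  {ffun S1 * S2 -> rat} := [ffun s => d1 s.1 * d2 s.2].

Definition dist_graph (S T : finType) (d : {ffun S -> rat}) (g : S -> T) :
  {ffun S * T -> rat} := [ffun s => d s.1 * (s.2 == g s.1)%:R].

Lemma is_dist_pair (S1 S2 : finType) (d1 : {ffun S1 -> rat}) (d2 : {ffun S2 -> rat}) :
  is_dist d1 -> is_dist d2 -> is_dist (dist_pair d1 d2).
Proof.
move=> [d1_ge0 d1_sum] [d2_ge0 d2_sum]; split=> [s|]; first by rewrite ffunE mulr_ge0.
under eq_bigr do rewrite ffunE.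
rewrite -(pair_big xpredT xpredT (fun i j => d1 i * d2 j)) -big_distrlr /=.
by rewrite d1_sum d2_sum mulr1.
Qed.

Lemma is_dist_graph (S T : finType) (d : {ffun S -> rat}) (g : S -> T) :
  is_dist d -> is_dist (dist_graph d g).
Proof.
move=> [d_ge0 d_sum]; split=> [s|]; first by rewrite ffunE mulr_ge0.
under eq_bigr do rewrite ffunE.
rewrite -(pair_big xpredT xpredT (fun i t => d i * ((t == g i)%:R : rat))) /=.
apply: etrans d_sum; apply: eq_bigr => q _; rewrite -big_distrr /= (bigD1 (g q)) //= eqxx.
by rewrite big1_idem ?addr0 ?mulr1 // => t /negbTE ->.
Qed.

Lemma prodr_natb (V : comPzSemiRingType) (I : finType) (c : pred I) :
  \prod_i ((c i)%:R : V) = ([forall i, c i])%:R.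
Proof.
case: (boolP [forall i, c i]) => [/forallP call | /forallPn [i nci]].
  by rewrite big1 // => i _; rewrite call.
by rewrite (bigD1 i) //= (negbTE nci) mul0r.
Qed.

(* [B1] and [B2] run synchronously next to the flag machine whose keys are
   their transitions, valued by the weights scaled by [sg]; the output is
   scaled back by [sg].  With [sg = -1] the construction for limsup and min
   becomes one for liminf and max. *)
Section FlagProduct.
Variables (Sigma : finType) (sg : rat) (B1 B2 : PWA Sigma).
Local Notation S1 := (state B1).
Local Notation S2 := (state B2).

Definition trans_key := ((S1 * Sigma * S1) + (S2 * Sigma * S2))%type.

Definition key_weight (k : trans_key) : rat :=
  match k with
  | inl t => sg * weight t.1.1 t.1.2 t.2
  | inr t => sg * weight t.1.1 t.1.2 t.2
  end.

Definition flag_state := (S1 * S2 * {ffun trans_key -> bool * bool})%type.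

Definition no_flags : {ffun trans_key -> bool * bool} := [ffun => (false, false)].

Definition next_flags (s : flag_state) (a : Sigma) (q : S1 * S2) :=
  next_keyflags key_weight s.2 (sg * weight s.1.1 a q.1) (sg * weight s.1.2 a q.2).

Definition flag_product_init : {ffun flag_state -> rat} :=
  dist_graph (dist_pair (init B1) (init B2)) (fun _ => no_flags).

Definition flag_product_trans (s : flag_state) (a : Sigma) : {ffun flag_state -> rat} :=
  dist_graph (dist_pair (trans s.1.1 a) (trans s.1.2 a)) (next_flags s a).

Definition flag_product_weight (s : flag_state) (a : Sigma) (s' : flag_state) : rat :=
  sg * flag_output key_weight s.2 (sg * weight s.1.1 a s'.1.1) (sg * weight s.1.2 a s'.1.2).

Lemma flag_product_init_dist : is_dist flag_product_init.
Proof. exact/is_dist_graph/is_dist_pair/init_is_dist/init_is_dist. Qed.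

Lemma flag_product_trans_dist s a : is_dist (flag_product_trans s a).
Proof. exact/is_dist_graph/is_dist_pair/trans_is_dist/trans_is_dist. Qed.

Definition flag_product : PWA Sigma :=
  @Build_PWA Sigma flag_state flag_product_init flag_product_trans flag_product_weight
    flag_product_init_dist flag_product_trans_dist.

Variable w : nat -> Sigma.

Definition key1 (r1 : seqT B1) n : trans_key := inl (r1 n, w n, r1 n.+1).
Definition key2 (r2 : seqT B2) n : trans_key := inr (r2 n, w n, r2 n.+1).

Definition pair_run (r : seqT B1 * seqT B2) : seqT flag_product :=
  fun n => ((r.1 n, r.2 n), keyflags key_weight (key1 r.1) (key2 r.2) n).

Lemma pair_run_io (P : rat -> Prop) (r1 : seqT B1) (r2 : seqT B2) :
  sg * sg = 1 -> (forall x y, x <= y -> P x -> P y) ->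
  infinitely_often (fun n =>
    P (sg * weight (pair_run (r1, r2) n) (w n) (pair_run (r1, r2) n.+1))) <->
  infinitely_often (fun n => P (sg * weight (r1 n) (w n) (r1 n.+1))) /\
  infinitely_often (fun n => P (sg * weight (r2 n) (w n) (r2 n.+1))).
Proof.
move=> sg2 Pup.
have -> : (fun n =>
    P (sg * weight (pair_run (r1, r2) n) (w n) (pair_run (r1, r2) n.+1))) =
    P \o keyflags_output key_weight (key1 r1) (key2 r2).
  by apply/funext => n; rewrite /= /flag_product_weight mulrA sg2 mul1r.
exact: io_keyflags_output.
Qed.

End FlagProduct.

Arguments key_weight {Sigma} sg {B1 B2}.

Section PairRunMeasure.
Variables (Sigma : finType) (sg : rat) (B1 B2 : PWA Sigma) (R : realType).
Variable w : nat -> Sigma.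
Local Notation C := (flag_product sg B1 B2).

Definition pair_run_map (r : (RunSpace B1 * RunSpace B2)%type) : RunSpace C :=
  pair_run sg w r.

Definition flags_consistent (p : nat -> state C) n :=
  ((p 0%N).2 == no_flags B1 B2) &&
  [forall i : 'I_n, (p i.+1).2 == next_flags sg (p i) (w i) (p i.+1).1].

Lemma pair_run_map_preimage_cyl n p : pair_run_map @^-1` cyl n.+1 p =
  if flags_consistent p n
  then cyl n.+1 (fun i => (p i).1.1) `*` cyl n.+1 (fun i => (p i).1.2) else set0.
Proof.
apply/seteqP; split=> -[r1 r2] /=.
  move=> rp; suff -> : flags_consistent p n by split=> i /rp <-.
  apply/andP; split; first by apply/eqP; rewrite -(rp 0%N erefl).
  apply/forallP => i; apply/eqP.
  by rewrite -(rp i.+1 (ltn_ord i)) -(rp i (ltnW (ltn_ord i))).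
case: ifPn => // /andP[/eqP flags0 /forallP flagsS] [/= r1p r2p] i le_in.
have flagsE : keyflags (key_weight sg) (key1 B2 w r1) (key2 B1 w r2) i = (p i).2.
  elim: i le_in => [|i IH] le_in; first by rewrite flags0.
  rewrite /= IH ?(ltnW le_in) // (eqP (flagsS (@Ordinal n i le_in))) /=.
  by rewrite /key1 /key2 /= !r1p ?r2p // ltnW.
by rewrite /pair_run_map /pair_run /= r1p // r2p // flagsE; case: (p i) => -[].
Qed.

Lemma measurable_pair_run_map : measurable_fun setT pair_run_map.
Proof.
apply: (@measurability _ _ _ _ setT pair_run_map (@cylinders _ C)) => //.
move=> _ [B [[|n] [p ->]] <-]; rewrite setTI; first by rewrite cyl0 preimage_setT.
rewrite pair_run_map_preimage_cyl; case: ifP => // _.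
by apply: measurableX; exact: cyl_measurable.
Qed.

HB.instance Definition _ :=
  isMeasurableFun.Build _ _ _ _ pair_run_map measurable_pair_run_map.

Variables (P1 : probability (RunSpace B1) R) (P2 : probability (RunSpace B2) R).

Definition pair_run_measure := distribution (P1 \x P2)%E [mfun of pair_run_map].

Lemma flag_product_prefix_prob (p : nat -> state C) n :
  init C (p 0%N) * \prod_(i < n) trans (p i) (w i) (p i.+1) =
  (init B1 (p 0%N).1.1 * \prod_(i < n) trans (p i).1.1 (w i) (p i.+1).1.1) *
  (init B2 (p 0%N).1.2 * \prod_(i < n) trans (p i).1.2 (w i) (p i.+1).1.2) *
  (flags_consistent p n)%:R.
Proof.
rewrite /= /flag_product_init /flag_product_trans /dist_graph /dist_pair !ffunE.
under eq_bigr do rewrite !ffunE.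
rewrite !big_split /= (prodr_natb _ (fun i : 'I_n => _ == _)).
rewrite /flags_consistent -mulnb natrM.
by set a := init B1 _; set b := init B2 _; set c := ((_ == _)%:R); ring.
Qed.

Lemma is_run_measure_pair : is_run_measure w P1 -> is_run_measure w P2 ->
  is_run_measure w pair_run_measure.
Proof.
move=> HP1 HP2 n p.
change ((P1 \x P2)%E (pair_run_map @^-1` cyl n.+1 p) =
  (ratr (init C (p 0%N) * \prod_(i < n) trans (p i) (w i) (p i.+1)))%:E).
rewrite pair_run_map_preimage_cyl flag_product_prefix_prob; case: ifP => _; last first.
  by rewrite mulr0 rmorph0 measure0.
rewrite product_measure1E; try exact: cyl_measurable.
apply: etrans (congr2 (fun x y => (x * y)%E) (HP1 n _) (HP2 n _)) _.
by rewrite mulr1n mulr1 [in RHS]rmorphM /= EFinM.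
Qed.

End PairRunMeasure.

Section PairRunEvents.
Variables (Sigma : finType) (B1 B2 : PWA Sigma) (R : realType) (w : nat -> Sigma).

Lemma limsup_event_io (B : PWA Sigma) (eta : R) (r : seqT B) :
  limsup_event w eta r <->
  infinitely_often (fun n => eta <= ratr (1 * weight (r n) (w n) (r n.+1))).
Proof. by rewrite limsup_eventP; split=> io; apply: io_sub io => n; rewrite mul1r. Qed.

Lemma not_liminf_event_io (B : PWA Sigma) (eta : R) (r : seqT B) :
  ~ liminf_event w eta r <->
  infinitely_often (fun n => - eta < ratr (-1 * weight (r n) (w n) (r n.+1))).
Proof.
rewrite liminf_eventP; split=> [/contrapT io | io nio]; last apply: nio;
  by apply: io_sub io => n; rewrite mulN1r rmorphN ltrN2.
Qed.

Lemma pair_run_limsup_event (eta : R) :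
  @pair_run_map _ 1 B1 B2 w @^-1` limsup_event w eta =
  limsup_event (A := B1) w eta `*` limsup_event (A := B2) w eta.
Proof.
have up x y : x <= y -> eta <= ratr x -> eta <= ratr y.
  by move=> le_xy /le_trans; apply; rewrite ler_rat.
have pair_io (r1 : seqT B1) (r2 : seqT B2) :=
  @pair_run_io _ 1 B1 B2 w _ r1 r2 (mulr1 1) up.
apply/seteqP; split=> -[r1 r2] /=.
  by move=> /limsup_event_io /pair_io [io1 io2]; split; apply/limsup_event_io.
by move=> [/limsup_event_io io1 /limsup_event_io io2]; apply/limsup_event_io/pair_io.
Qed.

Lemma pair_run_liminf_eventC (eta : R) :
  @pair_run_map _ (-1) B1 B2 w @^-1` (~` liminf_event w eta) =
  ~` liminf_event (A := B1) w eta `*` ~` liminf_event (A := B2) w eta.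
Proof.
have up x y : x <= y -> - eta < ratr x -> - eta < ratr y.
  by move=> le_xy /lt_le_trans; apply; rewrite ler_rat.
have pair_io (r1 : seqT B1) (r2 : seqT B2) :=
  @pair_run_io _ (-1) B1 B2 w _ r1 r2 (etrans (mulrNN 1 1) (mulr1 1)) up.
apply/seteqP; split=> -[r1 r2] /=.
  by move=> /not_liminf_event_io /pair_io [io1 io2]; split; apply/not_liminf_event_io.
move=> [/not_liminf_event_io io1 /not_liminf_event_io io2].
exact/not_liminf_event_io/pair_io.
Qed.

End PairRunEvents.

Lemma ereal_sup_EFin_setU (R : realType) (S1 S2 : set R) :
  ereal_sup [set x%:E | x in S1 `|` S2] =
  Order.max (ereal_sup [set x%:E | x in S1]) (ereal_sup [set x%:E | x in S2]).
Proof.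
apply/eqP; rewrite eq_le ge_max; apply/andP; split.
  apply: ub_ereal_sup => _ [x [S1x | S2x] <-]; rewrite le_max.
    by rewrite ereal_sup_ubound //; exists x.
  by rewrite orbC ereal_sup_ubound //; exists x.
by apply/andP; split; apply: le_ereal_sup => _ [x Sx <-]; exists x => //; [left | right].
Qed.

Lemma ereal_sup_EFin_setI_down (R : realType) (S1 S2 : set R) :
  (forall x y, y <= x -> S1 x -> S1 y) -> (forall x y, y <= x -> S2 x -> S2 y) ->
  ereal_sup [set x%:E | x in S1 `&` S2] =
  Order.min (ereal_sup [set x%:E | x in S1]) (ereal_sup [set x%:E | x in S2]).
Proof.
move=> S1_down S2_down; apply/eqP; rewrite eq_le le_min.
apply/andP; split.
  by apply/andP; split; apply: le_ereal_sup => _ [x [S1x S2x] <-]; exists x.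
rewrite leNgt; apply/negP => lt_sup.
have lt1 : (ereal_sup [set x%:E | x in S1 `&` S2] < ereal_sup [set x%:E | x in S1])%E.
  by apply: (lt_le_trans lt_sup); rewrite ge_min lexx.
have lt2 : (ereal_sup [set x%:E | x in S1 `&` S2] < ereal_sup [set x%:E | x in S2])%E.
  by apply: (lt_le_trans lt_sup); rewrite ge_min lexx orbT.
have [_ [x1 S1x1 <-] lt_x1] := ereal_sup_gt lt1.
have [_ [x2 S2x2 <-] lt_x2] := ereal_sup_gt lt2.
have S12 : (S1 `&` S2) (Order.min x1 x2).
  by split; [apply: S1_down S1x1 | apply: S2_down S2x2]; rewrite ge_min lexx ?orbT.
have : ((Order.min x1 x2)%:E <= ereal_sup [set x%:E | x in S1 `&` S2])%E.
  by apply: ereal_sup_ubound; exists (Order.min x1 x2).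
by rewrite leNgt; case: (leP x1 x2) => _; rewrite ?lt_x1 ?lt_x2.
Qed.

Lemma probability_eq1_setC d (T : measurableType d) (R : realType) (P : probability T R)
    (E : set T) :
  measurable E -> P E = 1%E <-> P (~` E) = 0%E.
Proof.
move=> mE; rewrite probability_setC //.
have : P E \is a fin_num.
  by rewrite ge0_fin_numE // (le_lt_trans (probability_le1 P mE)) ?ltry.
case: (P E) => [x | |] // _; rewrite -EFinB.
by split=> [[->] | [/eqP]]; [rewrite subrr | rewrite subr_eq0 => /eqP <-].
Qed.

Section PairRunMeasureEvents.
Variables (Sigma : finType) (A1 A2 : PWA Sigma) (R : realType) (w : nat -> Sigma).
Variables (P1 : probability (RunSpace A1) R) (P2 : probability (RunSpace A2) R).

Lemma pair_run_measure_limsup_event_gt0 (eta : R) :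
  (0 < pair_run_measure (sg := 1) w P1 P2 (limsup_event w eta))%E <->
  (0 < P1 (limsup_event w eta))%E /\ (0 < P2 (limsup_event w eta))%E.
Proof.
change ((0 < (P1 \x P2)%E (pair_run_map 1 w @^-1` limsup_event w eta))%E <->
  (0 < P1 (limsup_event w eta))%E /\ (0 < P2 (limsup_event w eta))%E).
rewrite pair_run_limsup_event product_measure1E; try exact: limsup_event_measurable.
by rewrite mule_ge0_gt0 //; split=> [/andP | [-> ->]].
Qed.

Lemma pair_run_measure_liminf_event_eq1 (eta : R) :
  pair_run_measure (sg := -1) w P1 P2 (liminf_event w eta) = 1%E <->
  P1 (liminf_event w eta) = 1%E \/ P2 (liminf_event w eta) = 1%E.
Proof.
rewrite !probability_eq1_setC; try exact: liminf_event_measurable.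
change ((P1 \x P2)%E (pair_run_map (-1) w @^-1` (~` liminf_event w eta)) = 0%E <->
  P1 (~` liminf_event w eta) = 0%E \/ P2 (~` liminf_event w eta) = 0%E).
rewrite pair_run_liminf_eventC product_measure1E;
  try by apply: measurableC; exact: liminf_event_measurable.
split=> [/eqP | zero12]; first by rewrite mule_eq0 => /orP[/eqP | /eqP]; [left | right].
by apply/eqP; rewrite mule_eq0; case: zero12 => /eqP ->; rewrite ?orbT.
Qed.

End PairRunMeasureEvents.

Lemma limsup_event_prob_down (Sigma : finType) (A : PWA Sigma) (R : realType) w
    (P : probability (RunSpace A) R) (x y : R) :
  y <= x -> (0 < P (limsup_event w x))%E -> (0 < P (limsup_event w y))%E.
Proof.
move=> le_yx /lt_le_trans; apply; apply: le_measure; rewrite ?inE;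
  try exact: limsup_event_measurable.
by move=> r /=; apply: le_trans; rewrite lee_fin.
Qed.

Theorem L_PosLimSup_flag_product (R : realType) (Sigma : finType) (A1 A2 : PWA Sigma)
    (w : nat -> Sigma) :
  L_PosLimSup R (flag_product 1 A1 A2) w =
  Order.min (L_PosLimSup R A1 w) (L_PosLimSup R A2 w).
Proof.
have [P1 HP1] := run_measure_exists A1 R w; have [P2 HP2] := run_measure_exists A2 R w.
rewrite /L_PosLimSup (L_pos_run_measure (is_run_measure_pair (sg := 1) HP1 HP2)).
rewrite (L_pos_run_measure HP1) (L_pos_run_measure HP2).
rewrite -ereal_sup_EFin_setI_down; try exact: limsup_event_prob_down.
congr (ereal_sup [set _%:E | _ in _]); apply/seteqP.
by split=> eta /pair_run_measure_limsup_event_gt0.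
Qed.

Theorem L_AsLimInf_flag_product (R : realType) (Sigma : finType) (A1 A2 : PWA Sigma)
    (w : nat -> Sigma) :
  L_AsLimInf R (flag_product (-1) A1 A2) w =
  Order.max (L_AsLimInf R A1 w) (L_AsLimInf R A2 w).
Proof.
have [P1 HP1] := run_measure_exists A1 R w; have [P2 HP2] := run_measure_exists A2 R w.
rewrite /L_AsLimInf (L_as_run_measure (is_run_measure_pair (sg := -1) HP1 HP2)).
rewrite (L_as_run_measure HP1) (L_as_run_measure HP2) -ereal_sup_EFin_setU.
congr (ereal_sup [set _%:E | _ in _]); apply/seteqP.
by split=> eta /pair_run_measure_liminf_event_eq1.
Qed.

Theorem lemma18 (R : realType) (Sigma : finType) :
  (forall A1 A2 : PWA Sigma, exists A : PWA Sigma, forall w : nat -> Sigma,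
     L_PosLimSup R A w =
     Order.min (L_PosLimSup R A1 w) (L_PosLimSup R A2 w)) /\
  (forall A1 A2 : PWA Sigma, exists A : PWA Sigma, forall w : nat -> Sigma,
     L_AsLimInf R A w =
     Order.max (L_AsLimInf R A1 w) (L_AsLimInf R A2 w)).
Proof.
split=> A1 A2.
  by exists (flag_product 1 A1 A2) => w; exact: L_PosLimSup_flag_product.
by exists (flag_product (-1) A1 A2) => w; exact: L_AsLimInf_flag_product.
Qed.
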